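(* In the Boosted HiPPA setting of the context, let $\{x^k\}$ and $\{\bar x^k\}$ be generated by the algorithm and let $\bar y^k\in\operatorname{prox}^p_{\gamma\varphi}(x^k)$ satisfy $\|\bar x^k-\bar y^k\|=\operatorname{dist}(\bar x^k,\operatorname{prox}^p_{\gamma\varphi}(x^k))$. Then: (a) $\sum_{k=0}^\infty\|R^{\varepsilon_k}_\gamma(x^k)\|^p<\infty$ and $R^{\varepsilon_k}_\gamma(x^k)\to0$; (b) $\{x^k\},\{\bar x^k\},\{\bar y^k\}$ have the same cluster points (if any), and each cluster point is a proximal fixed point, i.e., a point $\hat x$ with $\hat x\in\operatorname{prox}^p_{\gamma\varphi}(\hat x)$; (c) there is a finite $\mathcal{F}\in\mathbb{R}$ with $\lim_k\varphi^p_\gamma(x^k)=\lim_k\varphi(\bar y^k)=\lim_k\varphi^{p,\varepsilon_k}_\gamma(x^k)=\lim_k\varphi(\bar x^k)=\mathcal{F}$; moreover, if $\hat x$ is a cluster point of $\{x^k\}$ then $\varphi(\hat x)=\varphi^p_\gamma(\hat x)=\mathcal{F}$; finally, if $\{x^k\}$ is bounded then $\lim_k\varphi^p_\gamma(\bar y^k)=\mathcal{F}$; (d) $\varphi$ and $\varphi^p_\gamma$ are constant on the set of cluster points of $\{x^k\}$ (if any).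
   Context: Standing setting. $p>1$; $\varphi:\mathbb{R}^n\to\mathbb{R}\cup\{+\infty\}$ is proper, lsc and bounded from below. For $\gamma>0$: $\operatorname{prox}^p_{\gamma\varphi}(x):=\operatorname{argmin}_y\big(\varphi(y)+\frac1{p\gamma}\|x-y\|^p\big)$, $\varphi^p_\gamma(x):=\inf_y\big(\varphi(y)+\frac1{p\gamma}\|x-y\|^p\big)$. $\{\varepsilon_k\},\{\delta_k\}$ are non-increasing positive sequences with $\sum_k\varepsilon_k<\infty$, $\delta_k\downarrow0$. Prox approximation: for each index $j$ and point $x$ needed, a point $P_j(x)$ (written $\operatorname{prox}^{p,\varepsilon_j}_{\gamma\varphi}(x)$) is available with $\operatorname{dist}(P_j(x),\operatorname{prox}^p_{\gamma\varphi}(x))<\delta_j$ and $\varphi(P_j(x))+\frac1{p\gamma}\|x-P_j(x)\|^p<\varphi^p_\gamma(x)+\varepsilon_j$. Define $\varphi^{p,\varepsilon_j}_\gamma(x):=\varphi(P_j(x))+\frac1{p\gamma}\|x-P_j(x)\|^p$, $R^{\varepsilon_j}_\gamma(x):=x-P_j(x)$. Boosted HiPPA: choose $x^0$, $\gamma>0$, $\sigma\in(0,\frac1{p\gamma})$, $\vartheta\in(0,1)$. At iteration $k$: $\bar x^k:=P_k(x^k)$; choose a direction $d^k$; for $m=0,1,\dots$ set $\alpha_k=\vartheta^m$, $\hat x^{k+1}=(1-\alpha_k)\bar x^k+\alpha_k(x^k+d^k)$, until $\varphi^{p,\varepsilon_{k+1}}_\gamma(\hat x^{k+1})\le\varphi^{p,\varepsilon_k}_\gamma(x^k)-\sigma\|R^{\varepsilon_k}_\gamma(x^k)\|^p+\varepsilon_k+\varepsilon_{k+1}$;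 set $x^{k+1}=\hat x^{k+1}$. *)

From HB Require Import structures.
From mathcomp Require Import all_boot all_order all_algebra.
From mathcomp Require Import all_classical all_reals all_analysis.
Set Implicit Arguments. Unset Strict Implicit. Unset Printing Implicit Defensive.
Import Order.TTheory GRing.Theory Num.Theory.
Import numFieldNormedType.Exports.
Local Open Scope classical_set_scope.
Local Open Scope ring_scope.

Definition enorm {R : realType} {n : nat} (v : 'rV[R]_n) : R :=
  Num.sqrt (\sum_(i < n) (v ord0 i) ^+ 2).

Definition proper_fun {R : realType} {n : nat} (phi : 'rV[R]_n -> \bar R) : Prop :=
  (exists x, (phi x < +oo)%E) /\ (forall x, (-oo < phi x)%E).

Definition bounded_below {R : realType} {n : nat} (phi : 'rV[R]_n -> \bar R) : Prop :=
  exists m : R, forall x, (m%:E <= phi x)%E.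

Definition prox_obj {R : realType} {n : nat} (p gamma : R)
  (phi : 'rV[R]_n -> \bar R) (x y : 'rV[R]_n) : \bar R :=
  (phi y + (((p * gamma)^-1) * (enorm (x - y)) `^ p)%:E)%E.

Definition prox {R : realType} {n : nat} (p gamma : R)
  (phi : 'rV[R]_n -> \bar R) (x : 'rV[R]_n) : set 'rV[R]_n :=
  [set y | forall z, (prox_obj p gamma phi x y <= prox_obj p gamma phi x z)%E].

Definition env {R : realType} {n : nat} (p gamma : R)
  (phi : 'rV[R]_n -> \bar R) (x : 'rV[R]_n) : \bar R :=
  ereal_inf (range (prox_obj p gamma phi x)).

Definition approx_env {R : realType} {n : nat} (p gamma : R)
  (phi : 'rV[R]_n -> \bar R) (P : nat -> 'rV[R]_n -> 'rV[R]_n) (j : nat)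
  (x : 'rV[R]_n) : \bar R :=
  prox_obj p gamma phi x (P j x).

(* P is an inexact prox oracle: dist(P_j x, prox(x)) < delta_j and
   phi^{p,eps_j}(x) < phi^p_gamma(x) + eps_j.  (dist(z,S) < d is written as
   "some s in S has ||z - s|| < d", which is literally equivalent.) *)
Definition prox_oracle {R : realType} {n : nat} (p gamma : R)
  (phi : 'rV[R]_n -> \bar R) (eps delta : nat -> R)
  (P : nat -> 'rV[R]_n -> 'rV[R]_n) : Prop :=
  forall (j : nat) (x : 'rV[R]_n),
    (exists2 y, prox p gamma phi x y & enorm (P j x - y) < delta j) /\
    (approx_env p gamma phi P j x < env p gamma phi x + (eps j)%:E)%E.

Definition descent_test {R : realType} {n : nat} (p gamma sigma : R)
  (phi : 'rV[R]_n -> \bar R) (eps : nat -> R)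
  (P : nat -> 'rV[R]_n -> 'rV[R]_n) (k : nat) (xk xhat : 'rV[R]_n) : Prop :=
  (approx_env p gamma phi P k.+1 xhat <=
     approx_env p gamma phi P k xk
     - (sigma * (enorm (xk - P k xk)) `^ p)%:E + (eps k)%:E + (eps k.+1)%:E)%E.

Definition cluster_pt {R : realType} {n : nat} (u : nat -> 'rV[R]_n)
  (z : 'rV[R]_n) : Prop :=
  exists s : nat -> nat, (forall k, (s k < s k.+1)%N) /\
    (fun k => enorm (u (s k) - z)) @ \oo --> 0.

From HB Require Import structures.
From mathcomp Require Import all_boot all_order all_algebra.
From mathcomp Require Import all_classical all_reals all_analysis.
From mathcomp Require Import ring lra.
Import Order.TTheory GRing.Theory Num.Theory.
Import numFieldNormedType.Exports.
Local Open Scope classical_set_scope.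
Local Open Scope ring_scope.

(* With [a_k := phi^{p,eps_k}_gamma(x^k)], the descent test reads
   [a_{k+1} <= a_k - sigma ||R_k||^p + eps_k + eps_{k+1}]; as [a] is bounded
   below and [eps] is summable, [a_k] converges to some [F] and
   [sum_k ||R_k||^p < oo].  The oracle squeezes [phi^p_gamma(x^k)] between
   [a_k - eps_k] and [a_k], while [phi(xbar^k)] and [phi(ybar^k)] differ from
   [a_k] and [phi^p_gamma(x^k)] by [||.||^p / (p gamma) -> 0], so all these
   values tend to [F].  At a cluster point [z], lower semicontinuity of [phi]
   gives [phi(z) <= F] and upper semicontinuity of the envelope gives
   [F <= phi^p_gamma(z) <= phi(z)]; hence [phi(z) = phi^p_gamma(z) = F], which
   says exactly that [z] minimises the proximal objective at [z]. *)

Section euclidean_norm.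
Context {R : realType} {n : nat}.
Implicit Types u v w : 'rV[R]_n.

Lemma enorm_ge0 v : 0 <= enorm v.
Proof. exact: sqrtr_ge0. Qed.

Lemma enorm0 : enorm (0 : 'rV[R]_n) = 0.
Proof. by rewrite /enorm big1 ?sqrtr0// => i _; rewrite mxE expr0n. Qed.

Lemma enormN v : enorm (- v) = enorm v.
Proof. by rewrite /enorm; congr Num.sqrt; apply: eq_bigr => i _; rewrite mxE sqrrN. Qed.

Lemma enorm_distC u v : enorm (u - v) = enorm (v - u).
Proof. by rewrite -enormN opprB. Qed.

Lemma CauchySchwarz_sum (a b : 'I_n -> R) :
  \sum_i a i * b i <= Num.sqrt (\sum_i a i ^+ 2) * Num.sqrt (\sum_i b i ^+ 2).
Proof.
have sqr_sum_ge0 (c : 'I_n -> R) : 0 <= \sum_i c i ^+ 2.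
  by apply: sumr_ge0 => i _; exact: sqr_ge0.
have sum_mul0 (c d : 'I_n -> R) : Num.sqrt (\sum_i c i ^+ 2) = 0 -> \sum_i c i * d i = 0.
  move/eqP; rewrite sqrtr_eq0 => c_le0.
  have /psumr_eq0P c0 : \sum_i c i ^+ 2 = 0 by apply/le_anti; rewrite c_le0 sqr_sum_ge0.
  rewrite big1 // => i _; have /eqP := c0 (fun j _ => sqr_ge0 (c j)) i isT.
  by rewrite sqrf_eq0 => /eqP->; rewrite mul0r.
set u := Num.sqrt _; set w := Num.sqrt _.
have [u0|u_neq0] := eqVneq u 0; first by rewrite sum_mul0 // u0 mul0r.
have [w0|w_neq0] := eqVneq w 0.
  by under eq_bigr do rewrite mulrC; rewrite sum_mul0 // w0 mulr0.
have uw_gt0 : 0 < u * w by rewrite mulr_gt0 // lt_neqAle eq_sym ?u_neq0 ?w_neq0 sqrtr_ge0.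
have : 0 <= \sum_i (a i * w - b i * u) ^+ 2 by exact: sqr_sum_ge0.
have -> : \sum_i (a i * w - b i * u) ^+ 2 =
    w ^+ 2 * \sum_i a i ^+ 2 - 2 * u * w * \sum_i a i * b i + u ^+ 2 * \sum_i b i ^+ 2.
  by rewrite !mulr_sumr -sumrB -big_split; apply: eq_bigr => i _ /=; ring.
rewrite -[\sum_i a i ^+ 2]sqr_sqrtr ?sqr_sum_ge0 //.
rewrite -[\sum_i b i ^+ 2]sqr_sqrtr ?sqr_sum_ge0 // -/u -/w.
have -> : w ^+ 2 * u ^+ 2 - 2 * u * w * \sum_i a i * b i + u ^+ 2 * w ^+ 2 =
  2 * (u * w) * (u * w - \sum_i a i * b i) by ring.
by rewrite pmulr_rge0 ?subr_ge0 // mulr_gt0.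
Qed.

Lemma enormD u v : enorm (u + v) <= enorm u + enorm v.
Proof.
have sqr_sum_ge0 w : 0 <= \sum_i w ord0 i ^+ 2 by apply: sumr_ge0 => i _; exact: sqr_ge0.
rewrite -(@ler_pXn2r _ 2) ?nnegrE ?addr_ge0 ?enorm_ge0 //.
rewrite sqrrD /enorm !sqr_sqrtr ?sqr_sum_ge0 //.
have -> : \sum_i (u + v) ord0 i ^+ 2 =
    \sum_i u ord0 i ^+ 2 + 2 * \sum_i u ord0 i * v ord0 i + \sum_i v ord0 i ^+ 2.
  by rewrite mulr_sumr -!big_split; apply: eq_bigr => i _ /=; rewrite mxE; ring.
rewrite lerD2r lerD2l mulr2n -mulr2n -mulr_natl ler_pM2l //.
exact: CauchySchwarz_sum.
Qed.

Lemma enorm_distD u v w : enorm (u - w) <= enorm (u - v) + enorm (v - w).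
Proof. by have := enormD (u - v) (v - w); rewrite addrA subrK. Qed.

Lemma mx_norm_le_enorm v : `|v| <= enorm v.
Proof.
rewrite [`|v|]mx_normrE; apply: bigmax_le => [|[i j] _]; first exact: enorm_ge0.
rewrite /= (ord1 i) /enorm -sqrtr_sqr ler_sqrt; last first.
  by apply: sumr_ge0 => k _; exact: sqr_ge0.
by rewrite (bigD1 j) //= lerDl; apply: sumr_ge0 => k _; exact: sqr_ge0.
Qed.

Lemma enorm_cvg {v : nat -> 'rV[R]_n} {z} :
  (fun k => enorm (v k - z)) @ \oo --> 0 -> v @ \oo --> z.
Proof.
move/cvgr0Pnorm_lt => vz; apply/cvgrPdist_lt => e /vz; apply: filterS => k.
by rewrite ger0_norm ?enorm_ge0 // enorm_distC; apply: le_lt_trans (mx_norm_le_enorm _).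
Qed.

End euclidean_norm.

Section powR_facts.
Context {R : realType}.
Implicit Types p a b t : R.

Lemma powRVK p a : p != 0 -> 0 <= a -> (a `^ p^-1) `^ p = a.
Proof. by move=> p0 a0; rewrite -powRrM mulVf // powRr1. Qed.

(* With [c ^ p = 1 + alpha]: if [t <= (c - 1) b] then [(b + t) ^ p <= (1 + alpha) b ^ p];
   otherwise [b] is of the order of [t], so [b + t] itself is small. *)
Lemma powR_shift_le {p K eta} : 0 < p -> 0 <= K -> 0 < eta ->
  exists2 del, 0 < del & forall b t, 0 <= b <= K -> 0 <= t <= del ->
    (b + t) `^ p <= b `^ p + eta.
Proof.
move=> p_gt0 K_ge0 eta_gt0; have p_neq0 := lt0r_neq0 p_gt0.
set h := eta / 2; have h_gt0 : 0 < h by rewrite divr_gt0.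
set alpha := h / (K `^ p + 1).
have alpha_gt0 : 0 < alpha by rewrite divr_gt0 // ltr_wpDl // powR_ge0.
set c := (1 + alpha) `^ p^-1.
have cp : c `^ p = 1 + alpha by rewrite powRVK // addr_ge0 // ltW.
have c_gt1 : 1 < c.
  have : 1 `^ p^-1 < c.
    by apply: gt0_ltr_powR; rewrite ?invr_gt0 ?nnegrE ?ltrDl ?addr_ge0 // ltW.
  by rewrite powR1.
have c_gt0 : 0 < c := lt_trans ltr01 c_gt1.
set hp := h `^ p^-1; have hp_gt0 : 0 < hp by exact: powR_gt0.
exists (hp * (c - 1) / c); first by rewrite !divr_gt0 // mulr_gt0 // subr_gt0.
move=> b t /andP[b_ge0 b_le] /andP[t_ge0 t_le].
have [t_small|b_small] := leP t (b * (c - 1)).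
  have : (b + t) `^ p <= (b * c) `^ p.
    by apply: ge0_ler_powR; rewrite ?nnegrE ?addr_ge0 ?mulr_ge0 ?(ltW c_gt0) //; lra.
  move/le_trans; apply; rewrite powRM ?(ltW c_gt0) // cp mulrDr mulr1 lerD2l.
  have bpK : b `^ p <= K `^ p by apply: ge0_ler_powR; rewrite ?nnegrE // ltW.
  apply: le_trans (_ : K `^ p * alpha <= _); first by rewrite ler_wpM2r // ltW.
  rewrite /alpha mulrA ler_pdivrMr ?ltr_wpDl ?powR_ge0 //.
  by have := mulr_ge0 (powR_ge0 K p) (ltW eta_gt0); rewrite /h; lra.
have : (b + t) `^ p <= hp `^ p.
  apply: ge0_ler_powR; rewrite ?nnegrE ?addr_ge0 ?(ltW hp_gt0) ?(ltW p_gt0) //.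
  move: t_le; rewrite ler_pdivlMr // => t_le.
  have : b * (c - 1) + t * (c - 1) < hp * (c - 1) by nra.
  by rewrite -mulrDl ltr_pM2r ?subr_gt0 // => /ltW.
rewrite powRVK ?(ltW h_gt0) // => /le_trans; apply.
by have := powR_ge0 b p; rewrite /h; lra.
Qed.

Lemma cvg0_powR {p} {u : nat -> R} : 0 < p -> (forall k, 0 <= u k) ->
  u @ \oo --> 0 -> (fun k => u k `^ p) @ \oo --> 0.
Proof.
move=> p_gt0 u_ge0 /cvgr0Pnorm_le u0; apply/cvgr0Pnorm_le => e e_gt0.
have [del del_gt0 shift] := powR_shift_le p_gt0 (lexx 0) e_gt0.
apply: filterS (u0 _ del_gt0) => k; rewrite !ger0_norm ?powR_ge0 // => u_le.
have := shift 0 (u k); rewrite lexx u_ge0 u_le add0r powR0 ?add0r ?lt0r_neq0 //.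
by apply.
Qed.

Lemma cvg0_powRV {p} {u : nat -> R} : 0 < p -> (forall k, 0 <= u k) ->
  (fun k => u k `^ p) @ \oo --> 0 -> u @ \oo --> 0.
Proof.
move=> p_gt0 u_ge0 /cvgr0Pnorm_lt up0; apply/cvgr0Pnorm_lt => e e_gt0.
apply: filterS (up0 _ (powR_gt0 p e_gt0)) => k.
rewrite !ger0_norm ?powR_ge0 //; apply: contraTT; rewrite -!leNgt => e_le.
by apply: ge0_ler_powR; rewrite ?nnegrE // ltW.
Qed.

End powR_facts.

Section limits.
Context {R : realType}.

Lemma cvg_subseq {T : topologicalType} {s : nat -> nat} {u : nat -> T} {l : T} :
  (forall k, (s k < s k.+1)%N) -> u @ \oo --> l -> (u \o s) @ \oo --> l.
Proof.
move=> s_incr; apply: cvg_comp; apply/cvgnyPge => N.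
have s_ge k : (k <= s k)%N by elim: k => // k IHk; exact: leq_ltn_trans IHk (s_incr k).
by apply: filterS (nbhs_infty_ge N) => k /leq_trans; apply.
Qed.

Lemma cvg_perturbed_descent (m : R) (a s e : nat -> R) :
  (forall k, m <= a k) -> (forall k, 0 <= s k) -> (forall k, 0 <= e k) ->
  cvgn (series e) -> (forall k, a k.+1 <= a k - s k + e k) ->
  cvgn (series s) /\ cvgn a.
Proof.
move=> a_ge s_ge0 e_ge0 e_sum descent.
have T_le k : series e k <= limn (series e).
  by apply: nondecreasing_cvgn_le => //; exact: nondecreasing_series.
pose b k := a k - series e k.
have b_step k : b k.+1 + s k <= b k.
  by have := descent k; rewrite /b seriesSr; lra.
have b_ge k : m - limn (series e) <= b k by have := a_ge k; have := T_le k; rewrite /b; lra.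
have b_telescope N : b N + series s N <= b 0.
  elim: N => [|N IHN]; first by rewrite /series /= big_geq // addr0.
  by rewrite seriesSr; have := b_step N; lra.
split.
  apply: nondecreasing_is_cvgn; first exact: nondecreasing_series.
  exists (b 0 - m + limn (series e)) => _ [N _ <-].
  by have := b_telescope N; have := b_ge N; lra.
have b_cvg : cvgn b.
  apply: nonincreasing_is_cvgn; last by exists (m - limn (series e)) => _ [k _ <-].
  by apply/nonincreasing_seqP => k; have := b_step k; have := s_ge0 k; lra.
have -> : a = b + series e by apply: funext => k; rewrite /b /= subrK.
exact: is_cvgD.
Qed.

Lemma cvg_EFin_eq {f : nat -> \bar R} {g : nat -> R} {L : R} :
  (forall k, f k = (g k)%:E) -> g @ \oo --> L -> f @ \oo --> L%:E.
Proof. by move=> /funext-> gL; apply: cvg_EFin => //; exact: nearW. Qed.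

Lemma lsc_cvg_le {T : topologicalType} {f : T -> \bar R} {v : nat -> T} {z : T} {L : R} :
  lower_semicontinuous f -> v @ \oo --> z -> (f \o v) @ \oo --> L%:E ->
  (f z <= L%:E)%E.
Proof.
move=> f_lsc vz /fine_cvgP[fv_fin fv_L]; apply/lee_addgt0Pr => e e_gt0.
have sublevel_closed : closed (~` [set y | ((L + e)%:E < f y)%E]).
  exact/open_closedC/(lower_semicontinuousP f).1.
rewrite leNgt -EFinD; apply/negP; apply: (closed_cvg _ sublevel_closed _ _ vz).
apply: filterS2 fv_fin (cvgr_le _ fv_L (L + e) ltac:(by rewrite ltrDl)) => k /= fin_fvk.
by rewrite -(fineK fin_fvk) lte_fin leNgt => /negP.
Qed.

End limits.

Lemma cluster_pt_close {R : realType} {n : nat} {u w : nat -> 'rV[R]_n} {z} :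
  (fun k => enorm (u k - w k)) @ \oo --> 0 -> cluster_pt u z <-> cluster_pt w z.
Proof.
suff close_to (u' w' : nat -> 'rV[R]_n) :
    (fun k => enorm (u' k - w' k)) @ \oo --> 0 -> cluster_pt u' z -> cluster_pt w' z.
  move=> uw0; split; apply: close_to => //.
  by under eq_fun do rewrite enorm_distC.
move=> uw0 [s [s_incr uz]]; exists s; split => //.
apply: (@squeeze_cvgr _ _ _ _ (fun=> 0)
  (fun k => enorm (u' (s k) - w' (s k)) + enorm (u' (s k) - z))).
- apply: nearW => k; rewrite enorm_ge0 /= (enorm_distC (u' (s k))).
  exact: enorm_distD.
- exact: cvg_cst.
- by rewrite -[0](addr0 0); apply: cvgD => //; exact: (cvg_subseq s_incr uw0).
Qed.

Section envelope.
Context {R : realType} {n : nat} {p gamma : R} {phi : 'rV[R]_n -> \bar R} {m : R}.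
Hypotheses (p_gt0 : 0 < p) (gamma_gt0 : 0 < gamma).
Hypothesis phi_ge : forall y, (m%:E <= phi y)%E.
Hypothesis phi_fin : exists y, (phi y < +oo)%E.

Local Notation c := ((p * gamma)^-1).
Local Notation prox_obj := (prox_obj p gamma phi).
Local Notation env := (env p gamma phi).

Let c_gt0 : 0 < c. Proof. by rewrite invr_gt0 mulr_gt0. Qed.

Lemma prox_obj_ge_dist x y : ((m + c * enorm (x - y) `^ p)%:E <= prox_obj x y)%E.
Proof. by rewrite EFinD; apply: leeD. Qed.

Lemma prox_obj_ge x y : (m%:E <= prox_obj x y)%E.
Proof.
apply: le_trans (prox_obj_ge_dist x y); rewrite lee_fin lerDl.
by rewrite mulr_ge0 ?powR_ge0 // ltW.
Qed.

Lemma env_le_prox_obj x y : (env x <= prox_obj x y)%E.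
Proof. by apply: ge_ereal_inf; exists (prox_obj x y) => //; exists y. Qed.

Lemma env_fin_num x : env x \is a fin_num.
Proof.
rewrite fin_numElt; apply/andP; split.
  apply: lt_le_trans (ltNyr m) _; apply/ereal_infP => _ [y _ <-].
  exact: prox_obj_ge.
have [y phi_y_fin] := phi_fin; apply: le_lt_trans (env_le_prox_obj x y) _.
exact: lte_add_pinfty (ltry _).
Qed.

Lemma prox_objxx z : prox_obj z z = phi z.
Proof. by rewrite /prox_obj subrr enorm0 powR0 ?gt_eqF // mulr0 adde0. Qed.

Lemma env_le_phi z : (env z <= phi z)%E.
Proof. by rewrite -prox_objxx; exact: env_le_prox_obj. Qed.

Lemma env_prox {x y} : prox p gamma phi x y -> env x = prox_obj x y.
Proof.
move=> y_prox; apply/le_anti; rewrite env_le_prox_obj /=.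
by apply/ereal_infP => _ [y' _ <-]; exact: y_prox.
Qed.

Lemma prox_fixed_point z : (phi z <= env z)%E -> prox p gamma phi z z.
Proof. by move=> phi_le y; rewrite prox_objxx (le_trans phi_le) ?env_le_prox_obj. Qed.

(* Beyond distance [K] from [v] the objective exceeds [M]; within it, [x |-> x ^ p]
   is uniformly continuous. *)
Lemma env_le_near M eta : 0 < eta ->
  exists2 del, 0 < del & forall u v, enorm (u - v) <= del ->
    (env u <= M%:E)%E -> (env u <= env v + eta%:E)%E.
Proof.
move=> eta_gt0; set K := (`|M - m| / c) `^ p^-1.
have cK : c * K `^ p = `|M - m|.
  by rewrite powRVK ?gt_eqF ?divr_ge0 ?(ltW c_gt0) // mulrC divfK ?gt_eqF.
have [del del_gt0 shift_le] :=
  powR_shift_le p_gt0 (powR_ge0 _ _ : 0 <= K) (divr_gt0 eta_gt0 c_gt0).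
exists del => // u v uv_le envu_le; rewrite -leeBlDr //.
apply/ereal_infP => _ [y _ <-]; have [vy_le|vy_gt] := leP (enorm (v - y)) K.
  rewrite leeBlDr //; apply: le_trans (env_le_prox_obj u y) _.
  rewrite /prox_obj -addeA -EFinD leeD2l // lee_fin.
  have uy_le : enorm (u - y) <= enorm (v - y) + enorm (u - v).
    by rewrite [leRHS]addrC; exact: enorm_distD.
  have := shift_le (enorm (v - y)) (enorm (u - v)).
  rewrite !enorm_ge0 vy_le uv_le => /(_ isT isT) shift_vy.
  have uy_p_le : enorm (u - y) `^ p <= enorm (v - y) `^ p + eta / c.
    apply: le_trans shift_vy.
    by apply: ge0_ler_powR; rewrite ?nnegrE ?addr_ge0 ?enorm_ge0 ?(ltW p_gt0).
  have := ler_wpM2l (ltW c_gt0) uy_p_le.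
  by rewrite mulrDr mulrCA divff ?mulr1 ?lt0r_neq0.
apply: le_trans (prox_obj_ge_dist v y); rewrite leeBlDr //.
apply: le_trans envu_le _; rewrite -!EFinD lee_fin.
have : c * K `^ p <= c * enorm (v - y) `^ p.
  rewrite ler_wpM2l ?(ltW c_gt0) //.
  by rewrite ge0_ler_powR ?nnegrE ?powR_ge0 ?enorm_ge0 ?(ltW p_gt0) // ltW.
by rewrite cK; have := ler_norm (M - m); lra.
Qed.

Lemma env_near_ge {u v : nat -> 'rV[R]_n} {L : R} :
  (fun k => enorm (u k - v k)) @ \oo --> 0 -> (fun k => env (u k)) @ \oo --> L%:E ->
  forall eta, 0 < eta -> \forall k \near \oo, ((L - eta)%:E <= env (v k))%E.
Proof.
move=> uv0 envu_L eta eta_gt0; have eta2_gt0 : 0 < eta / 2 by rewrite divr_gt0.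
have [del del_gt0 near_le] := env_le_near (L + 1) _ eta2_gt0.
have envu_le : \forall k \near \oo, (env (u k) <= (L + 1)%:E)%E.
  apply: filterS (cvgr_le _ (fine_cvg envu_L) (L + 1) _) => [k uk_le|].
    by rewrite -[env (u k)](fineK (env_fin_num (u k))) lee_fin.
  by rewrite ltrDl.
have envu_ge : \forall k \near \oo, ((L - eta / 2)%:E <= env (u k))%E.
  apply: filterS (cvgr_ge _ (fine_cvg envu_L) (L - eta / 2) _) => [k uk_ge|]; last first.
    by rewrite gtrDl oppr_lt0.
  by rewrite -[env (u k)](fineK (env_fin_num (u k))) lee_fin.
move/cvgr0Pnorm_le: uv0 => /(_ _ del_gt0) uv_le.
apply: filterS (filterI (filterI envu_le envu_ge) uv_le) => k [[uk_le uk_ge] uvk_le].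
move: uvk_le => /(le_trans (ler_norm _)) uvk_le.
rewrite (_ : L - eta = L - eta / 2 - eta / 2); last by field.
rewrite EFinB leeBlDr; last exact: fin_numE.
exact: le_trans uk_ge (near_le _ _ uvk_le uk_le).
Qed.

Lemma env_cvg_le {u : nat -> 'rV[R]_n} {z} {L : R} :
  (fun k => enorm (u k - z)) @ \oo --> 0 -> (fun k => env (u k)) @ \oo --> L%:E ->
  (L%:E <= env z)%E.
Proof.
move=> uz envu_L; apply/lee_addgt0Pr => eta eta_gt0.
have [k ge_k] := filter_ex (env_near_ge uz envu_L _ eta_gt0).
by rewrite -leeBlDr // -EFinB.
Qed.

End envelope.

Section boosted_hippa.
Context {R : realType} {n : nat} {p gamma sigma : R} {phi : 'rV[R]_n -> \bar R} {m : R}.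
Context {eps delta : nat -> R} {P : nat -> 'rV[R]_n -> 'rV[R]_n}.
Context {x xbar ybar : nat -> 'rV[R]_n}.
Hypotheses (p_gt0 : 0 < p) (gamma_gt0 : 0 < gamma) (sigma_gt0 : 0 < sigma).
Hypothesis phi_ge : forall y, (m%:E <= phi y)%E.
Hypothesis phi_fin : exists y, (phi y < +oo)%E.
Hypothesis phi_lsc : lower_semicontinuous phi.
Hypotheses (eps_gt0 : forall k, 0 < eps k) (eps_noninc : forall k, eps k.+1 <= eps k).
Hypothesis eps_sum : cvgn (series eps).
Hypothesis delta_cvg0 : delta @ \oo --> 0.
Hypothesis oracle : prox_oracle p gamma phi eps delta P.
Hypothesis xbarE : forall k, xbar k = P k (x k).
Hypothesis descent : forall k, descent_test p gamma sigma phi eps P k (x k) (x k.+1).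
Hypothesis ybar_prox : forall k, prox p gamma phi (x k) (ybar k).
Hypothesis ybar_nearest : forall k y, prox p gamma phi (x k) y ->
  enorm (xbar k - ybar k) <= enorm (xbar k - y).

Local Notation c := ((p * gamma)^-1).
Local Notation env := (env p gamma phi).
Local Notation approx_env := (approx_env p gamma phi P).

Let env_fin := env_fin_num p_gt0 gamma_gt0 phi_ge phi_fin.

Lemma approx_env_fin_num j y : approx_env j y \is a fin_num.
Proof.
rewrite fin_numElt (lt_le_trans (ltNyr m)) ?prox_obj_ge //=.
have [_ approx_lt] := oracle j y; apply: lt_trans approx_lt _.
by rewrite -(fineK (env_fin y)) -EFinD ltry.
Qed.

Let a k := fine (approx_env k (x k)).
Let e k := fine (env (x k)).
Let r k := enorm (x k - xbar k).
Let q k := enorm (x k - ybar k).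

Let aE k : approx_env k (x k) = (a k)%:E.
Proof. by rewrite fineK ?approx_env_fin_num. Qed.

Let eE k : env (x k) = (e k)%:E.
Proof. by rewrite fineK ?env_fin. Qed.

Let approx_env_bounds k : e k <= a k < e k + eps k.
Proof.
have [_ approx_lt] := oracle k (x k).
by rewrite -!lee_fin -lte_fin EFinD -eE -aE approx_lt env_le_prox_obj.
Qed.

Let approx_env_ge k : m <= a k.
Proof. by rewrite -lee_fin -aE prox_obj_ge. Qed.

Let approx_env_descent k : a k.+1 <= a k - sigma * r k `^ p + 2 * eps k.
Proof.
have := descent k; rewrite /descent_test !aE -xbarE -EFinB -!EFinD lee_fin => /le_trans.
by apply; have := eps_noninc k; rewrite -/(r k); lra.
Qed.

Let phi_xbar k : phi (xbar k) = (a k - c * r k `^ p)%:E.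
Proof.
by rewrite EFinB -aE /approx_env /prox_obj -xbarE addeK.
Qed.

Let phi_ybar k : phi (ybar k) = (e k - c * q k `^ p)%:E.
Proof.
by rewrite EFinB -eE (env_prox (ybar_prox k)) /prox_obj addeK.
Qed.

Let residual_series_cvg : cvgn (series (fun k => r k `^ p)) /\ cvgn a.
Proof.
have [] := @cvg_perturbed_descent _ m a (fun k => sigma * r k `^ p) (fun k => 2 * eps k).
- exact: approx_env_ge.
- by move=> k; rewrite mulr_ge0 ?powR_ge0 // ltW.
- by move=> k; rewrite mulr_ge0 // ltW.
- exact: (@is_cvg_seriesZ _ _ 2 eps_sum).
- exact: approx_env_descent.
move=> /(@is_cvg_seriesZ _ _ sigma^-1) r_sum a_cvg; split => //.
have <- // : sigma^-1 *: (fun k => sigma * r k `^ p) = fun k => r k `^ p.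
by apply/funext => k /=; rewrite !fctE -[_ *: _]/(_ * _) mulKf ?gt_eqF.
Qed.

Let F := limn a.

Let approx_env_cvg : a @ \oo --> F.
Proof. exact: residual_series_cvg.2. Qed.

Let residual_cvg0 : r @ \oo --> 0.
Proof.
apply: (cvg0_powRV p_gt0) => [k|]; first exact: enorm_ge0.
exact: cvg_series_cvg_0 residual_series_cvg.1.
Qed.

Let env_cvg : e @ \oo --> F.
Proof.
apply: (@squeeze_cvgr _ _ _ _ (fun k => a k - eps k) a) => //.
  apply: nearW => k; have := approx_env_bounds k.
  by move: (a k) (e k) (eps k) => ? ? ?; lra.
by rewrite -[F]subr0; exact: cvgB approx_env_cvg (cvg_series_cvg_0 eps_sum).
Qed.

Let ybar_cvg0 : q @ \oo --> 0.
Proof.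
apply: (@squeeze_cvgr _ _ _ _ (fun=> 0) (fun k => r k + delta k)); last 2 first.
- exact: cvg_cst.
- by rewrite -[0]addr0; exact: cvgD residual_cvg0 delta_cvg0.
apply: nearW => k; rewrite /q /r enorm_ge0 /=.
apply/(le_trans (enorm_distD (x k) (xbar k) (ybar k))).
rewrite lerD2l; have [[y y_prox y_near] _] := oracle k (x k).
by apply: le_trans (ybar_nearest _ _ y_prox) _; rewrite xbarE ltW.
Qed.

Let phi_xbar_cvg : (fun k => a k - c * r k `^ p) @ \oo --> F.
Proof.
have rp_cvg0 := cvg0_powR p_gt0 (fun k => enorm_ge0 _) residual_cvg0.
by have := cvgB approx_env_cvg (cvgM (cvg_cst c) rp_cvg0); rewrite mulr0 subr0; apply.
Qed.

Let phi_ybar_cvg : (fun k => e k - c * q k `^ p) @ \oo --> F.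
Proof.
have qp_cvg0 := cvg0_powR p_gt0 (fun k => enorm_ge0 _) ybar_cvg0.
by have := cvgB env_cvg (cvgM (cvg_cst c) qp_cvg0); rewrite mulr0 subr0; apply.
Qed.

Let env_x_cvg : (fun k => env (x k)) @ \oo --> F%:E.
Proof. exact: cvg_EFin_eq eE env_cvg. Qed.

Let cluster_values z : cluster_pt x z -> phi z = F%:E /\ env z = F%:E.
Proof.
move=> xz; have env_le_phi_z := env_le_phi p_gt0 z (gamma := gamma) (phi := phi).
have phi_le : (phi z <= F%:E)%E.
  have [s [s_incr ybar_z]] := (cluster_pt_close ybar_cvg0).1 xz.
  apply: (lsc_cvg_le phi_lsc (enorm_cvg ybar_z)).
  exact: cvg_EFin_eq (fun k => phi_ybar (s k)) (cvg_subseq s_incr phi_ybar_cvg).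
have F_le : (F%:E <= env z)%E.
  have [s [s_incr x_z]] := xz.
  apply: (env_cvg_le p_gt0 gamma_gt0 phi_ge phi_fin x_z).
  exact: cvg_EFin_eq (fun k => eE (s k)) (cvg_subseq s_incr env_cvg).
split; apply/le_anti/andP; split.
- exact: phi_le.
- exact: le_trans F_le env_le_phi_z.
- exact: le_trans env_le_phi_z phi_le.
- exact: F_le.
Qed.

Let env_ybar_cvg : (fun k => env (ybar k)) @ \oo --> F%:E.
Proof.
apply: (cvg_EFin_eq (fun k => esym (fineK (env_fin (ybar k))))).
apply/cvgrPdist_le => eta eta_gt0.
have lower := env_near_ge p_gt0 gamma_gt0 phi_ge phi_fin ybar_cvg0 env_x_cvg _ eta_gt0.
have upper : \forall k \near \oo, e k - c * q k `^ p <= F + eta.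
  by apply: cvgr_le phi_ybar_cvg _ _; rewrite ltrDl.
apply: filterS (filterI lower upper) => k [lo up].
have := env_le_phi p_gt0 (ybar k) (gamma := gamma) (phi := phi).
rewrite phi_ybar; move: lo.
move: (env (ybar k)) (env_fin (ybar k)); case=> // E _; rewrite !lee_fin => lo hi.
rewrite /= ler_distl; move: lo hi up; move: (e k - _) => ? ? ? ?; lra.
Qed.

Lemma boosted_hippa_asymptotics :
  (cvgn (series (fun k => (enorm (x k - xbar k)) `^ p)) /\
   (fun k => enorm (x k - xbar k)) @ \oo --> 0) /\
  ((forall z, (cluster_pt x z <-> cluster_pt xbar z) /\
              (cluster_pt x z <-> cluster_pt ybar z)) /\
   (forall z, cluster_pt x z -> prox p gamma phi z z)) /\
  (exists F : R,
     [/\ (fun k => env (x k)) @ \oo --> F%:E,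
         (fun k => phi (ybar k)) @ \oo --> F%:E,
         (fun k => approx_env k (x k)) @ \oo --> F%:E &
         (fun k => phi (xbar k)) @ \oo --> F%:E] /\
     (forall z, cluster_pt x z -> phi z = F%:E /\ env z = F%:E) /\
         ((exists M : R, forall k, enorm (x k) <= M) ->
            (fun k => env (ybar k)) @ \oo --> F%:E)) /\
  (forall z1 z2, cluster_pt x z1 -> cluster_pt x z2 ->
     phi z1 = phi z2 /\ env z1 = env z2).
Proof.
split; first exact: (conj residual_series_cvg.1 residual_cvg0).
split.
  split=> z.
    exact: conj (cluster_pt_close residual_cvg0) (cluster_pt_close ybar_cvg0).
  case/cluster_values => phi_z env_z.
  by apply: prox_fixed_point p_gt0 _ _; rewrite phi_z env_z.
split.
  exists F; split; first split.
  - exact: env_x_cvg.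
  - exact: cvg_EFin_eq phi_ybar phi_ybar_cvg.
  - exact: cvg_EFin_eq aE approx_env_cvg.
  - exact: cvg_EFin_eq phi_xbar phi_xbar_cvg.
  split; first exact: cluster_values.
  by move=> _; exact: env_ybar_cvg.
move=> z1 z2 /cluster_values[phi_z1 env_z1] /cluster_values[phi_z2 env_z2].
by rewrite phi_z1 phi_z2 env_z1 env_z2.
Qed.

End boosted_hippa.

Theorem theorem10 (R : realType) (n : nat) (p gamma sigma theta : R)
  (phi : 'rV[R]_n -> \bar R) (eps delta : nat -> R)
  (P : nat -> 'rV[R]_n -> 'rV[R]_n)
  (x xbar d ybar : nat -> 'rV[R]_n) :
  1 < p ->
  proper_fun phi -> lower_semicontinuous phi -> bounded_below phi ->
  0 < gamma ->
  0 < sigma -> sigma < (p * gamma)^-1 ->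
  0 < theta -> theta < 1 ->
  (forall k, 0 < eps k) -> (forall k, eps k.+1 <= eps k) ->
  cvgn (series eps) ->
  (forall k, 0 < delta k) -> (forall k, delta k.+1 <= delta k) ->
  delta @ \oo --> 0 ->
  prox_oracle p gamma phi eps delta P ->
  (* Boosted HiPPA iterations *)
  (forall k, xbar k = P k (x k)) ->
  (forall k, exists m : nat,
      [/\ x k.+1 = (1 - theta ^+ m) *: xbar k + theta ^+ m *: (x k + d k),
          descent_test p gamma sigma phi eps P k (x k) (x k.+1) &
          forall m' : nat, (m' < m)%N ->
            ~ descent_test p gamma sigma phi eps P k (x k)
                ((1 - theta ^+ m') *: xbar k + theta ^+ m' *: (x k + d k))]) ->
  (* ybar k is a nearest point of prox(x k) to xbar k *)
  (forall k, prox p gamma phi (x k) (ybar k)) ->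
  (forall k y, prox p gamma phi (x k) y ->
      enorm (xbar k - ybar k) <= enorm (xbar k - y)) ->
  (* (a) *)
  (cvgn (series (fun k => (enorm (x k - xbar k)) `^ p)) /\
   (fun k => enorm (x k - xbar k)) @ \oo --> 0) /\
  (* (b) *)
  ((forall z, (cluster_pt x z <-> cluster_pt xbar z) /\
              (cluster_pt x z <-> cluster_pt ybar z)) /\
   (forall z, cluster_pt x z -> prox p gamma phi z z)) /\
  (* (c) *)
  (exists F : R,
     [/\ (fun k => env p gamma phi (x k)) @ \oo --> F%:E,
         (fun k => phi (ybar k)) @ \oo --> F%:E,
         (fun k => approx_env p gamma phi P k (x k)) @ \oo --> F%:E &
         (fun k => phi (xbar k)) @ \oo --> F%:E] /\
     (forall z, cluster_pt x z -> phi z = F%:E /\ env p gamma phi z = F%:E) /\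
         ((exists M : R, forall k, enorm (x k) <= M) ->
            (fun k => env p gamma phi (ybar k)) @ \oo --> F%:E)) /\
  (* (d) *)
  (forall z1 z2, cluster_pt x z1 -> cluster_pt x z2 ->
     phi z1 = phi z2 /\ env p gamma phi z1 = env p gamma phi z2).
Proof.
move=> p_gt1 [phi_fin _] phi_lsc [m phi_ge] gamma_gt0 sigma_gt0 _ _ _ eps_gt0 eps_noninc eps_sum
  _ _ delta_cvg0 oracle xbarE line_search ybar_prox ybar_nearest.
have descent k : descent_test p gamma sigma phi eps P k (x k) (x k.+1).
  by have [? []] := line_search k.
exact: (boosted_hippa_asymptotics (lt_trans ltr01 p_gt1) gamma_gt0 sigma_gt0 phi_ge phi_fin
  phi_lsc eps_gt0 eps_noninc eps_sum delta_cvg0 oracle xbarE descent ybar_prox ybar_nearest).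
Qed.
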